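(* Let $b_2\ge 2$, $p\ge1$, $1\le q<b_2$ be integers, $k=pb_2+q$, and let $M=k$. Over the $(b_2,M)$ burst erasure channel, the RD code (defined in the context) has delay profile $$(\underbrace{b_2,\dots,b_2}_{q},\underbrace{b_2+q,\dots,b_2+q}_{b_2},\underbrace{2b_2+q,\dots,2b_2+q}_{b_2},\dots,\underbrace{pb_2+q,\dots,pb_2+q}_{b_2}),$$ i.e. $s_j[t]$ is recoverable by time $t+b_2$ for $j\in[1,q]$ and by time $t+lb_2+q$ for $j\in[(l-1)b_2+q+1,lb_2+q]$, $l\in[p]$.
   Context: Convention: $m\bmod n$ denotes the representative of $m$ modulo $n$ in $\{1,\dots,n\}$. Point-to-point code: given $P'_0,\dots,P'_M\in\mathbb F^{k\times(n-k)}$ ($P'_i=0$ for $i\notin[0,M]$), messages $S[t]=(s_1[t],\dots,s_k[t])\in\mathbb F^k$ ($S[t]=0$ for $t<0$) are sent as $(S[t],P[t])$, $P[t]=\sum_{i=0}^M S[t-i]P'_i$; a $(b,M)$ burst channel erases packets so that in every window of $M+1$ consecutive slots the erased slots form at most one run of consecutive slots of length at most $b$. Delay profile $(d_1,\dots,d_k)$: for every admissible erasure pattern and all $t,i$, $s_i[t]$ is determined by the packets received at times $\le t+d_i$. RD code ($n-k=b_2$, in the paper $k=T-b_1$): $P'_i\in\mathbb F_2^{k\times b_2}$, $i\in[0,M]$: (I) for $i\in[b_2-1]$, a single $1$ at position $(i\bmod q,\,q+(i\bmod(b_2-q)))$, zeros elsewhere; (II) $P'_{b_2}(r,r)=1$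 for $r\in[q]$, zeros elsewhere; (III) for $j\in[p]$, $P'_{jb_2+q}$ has $I_{b_2}$ in rows $(j-1)b_2+q+1,\dots,jb_2+q$, zeros elsewhere; (IV) all other $P'_i=0$. *)

From HB Require Import structures.
From mathcomp Require Import all_boot all_order all_algebra.
Set Implicit Arguments. Unset Strict Implicit. Unset Printing Implicit Defensive.
Import GRing.Theory.
Local Open Scope ring_scope.

(* Time slots are natural numbers t >= 0; S[t] = 0 for t < 0 is encoded by
   dropping the terms with i > t.  Symbol/row/column indices are 0-based in
   Rocq ('I_k); the paper's 1-based index is (val j).+1. *)

Definition modr (m n : nat) : nat := if (m %% n == 0)%N then n else (m %% n)%N.

Definition parity (F : fieldType) (k r M : nat) (P' : nat -> 'M[F]_(k, r))
  (S : nat -> 'rV[F]_k) (t : nat) : 'rV[F]_r :=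
  \sum_(i < M.+1) (if (i <= t)%N then S (t - i)%N *m P' i else 0).

(* E (the set of erased slots) is admissible for the (b,M) burst channel:
   in every window [w, w+M] the erased slots form at most one run of
   consecutive slots of length at most b (l = 0 : no erasure in the window). *)
Definition burst_admissible (b M : nat) (E : nat -> bool) : Prop :=
  forall w : nat, exists a l : nat, (l <= b)%N /\
    forall t : nat, (w <= t <= w + M)%N -> E t = (a <= t < a + l)%N.

(* Symbol j of S[t] is determined by the packets (S[tau], P[tau]) received
   (tau not erased) at times tau <= T. *)
Definition recoverable (F : fieldType) (k r M : nat) (P' : nat -> 'M[F]_(k, r))
  (E : nat -> bool) (t : nat) (j : 'I_k) (T : nat) : Prop :=
  forall S S' : nat -> 'rV[F]_k,
    (forall tau : nat, (tau <= T)%N -> ~~ E tau ->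
        S tau = S' tau /\ parity M P' S tau = parity M P' S' tau) ->
    S t 0 j = S' t 0 j.

(* 1-based entry (r, c) of the RD matrix P'_i (k = p*b2+q rows, b2 columns). *)
Definition RD_entry (b2 p q i r c : nat) : bool :=
  [&& (1 <= i <= b2 - 1)%N, r == modr i q & c == q + modr i (b2 - q)]%N
  || [&& i == b2, (1 <= r <= q)%N & r == c]
  || has (fun j => [&& i == j * b2 + q,
                       ((j - 1) * b2 + q + 1 <= r <= j * b2 + q)%N
                     & c == r - ((j - 1) * b2 + q)]%N) (iota 1 p).

Definition RD (b2 p q : nat) (i : nat) : 'M['F_2]_(p * b2 + q, b2) :=
  \matrix_(r, c) (if RD_entry b2 p q i (val r).+1 (val c).+1 then 1 else 0).

(* Two input streams that produce the same received packets up to time T differ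
   by a stream D that vanishes on every received slot and whose parities vanish
   at every received slot, so it suffices to show D t = 0.  If t is erased, the
   channel erases a single burst [a, a + L) with L <= b2 around t and nothing
   else within distance M = k, hence D lives on the burst and every parity at a
   time >= a + L vanishes.  Each unknown entry is then isolated by one parity
   check whose other contributions are already known to vanish: the first q
   rows of the first q burst slots by the diagonal of P'_b2 at time x + b2,
   the first q rows of later burst slots, moving forward through the burst,
   by the single 1 of some P'_i with i < b2, and the rows of block l by the
   identity block of P'_(l b2 + q) at time x + l b2 + q. *)

From mathcomp Require Import all_boot all_order all_algebra zify.
Set Implicit Arguments. Unset Strict Implicit. Unset Printing Implicit Defensive.
Import GRing.Theory.

Lemma modr_bound m n : (0 < n)%N -> (1 <= modr m n <= n)%N.
Proof.
move=> n_gt0; rewrite /modr; case: eqP => [_|/eqP]; first by rewrite n_gt0 leqnn.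
by rewrite lt0n => -> /=; rewrite ltnW ?ltn_mod.
Qed.

Lemma modr_small r n : (1 <= r <= n)%N -> modr r n = r.
Proof.
rewrite /modr => /andP[r_gt0]; rewrite leq_eqVlt => /orP[/eqP->|r_lt]; first by rewrite modnn.
by rewrite modn_small //; case: eqP; lia.
Qed.

Lemma eq_modr m m' n : m = m' %[mod n] -> modr m n = modr m' n.
Proof. by rewrite /modr => ->. Qed.

Lemma modr_eq_mod m m' n : (0 < n)%N -> modr m n = modr m' n -> m = m' %[mod n].
Proof.
move=> n_gt0; have := ltn_mod m n; have := ltn_mod m' n; rewrite n_gt0 /modr.
by case: eqP; case: eqP; lia.
Qed.

Lemma modr_eq_gap m m' n : (0 < n)%N -> modr m n = modr m' n -> (m < m')%N -> (m + n <= m')%N.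
Proof.
move=> n_gt0 /(modr_eq_mod n_gt0) /eqP eqm lt_mm'.
have : (n %| m' - m)%N by rewrite -eqn_mod_dvd 1?(ltnW lt_mm') // eq_sym.
by move/dvdn_leq; rewrite subn_gt0 lt_mm' => /(_ isT); lia.
Qed.

Lemma modr_onto_window s n r : (0 < n)%N -> (1 <= r <= n)%N ->
  exists m, [/\ (s <= m < s + n)%N & modr m n = r].
Proof.
move=> n_gt0 r_in; exists (s + (r + n - s %% n) %% n); split.
  by rewrite leq_addr ltn_add2l ltn_mod.
rewrite -{2}(modr_small r_in); apply: eq_modr; rewrite modnDmr.
have := divn_eq s n; have := ltn_mod s n; rewrite n_gt0 => lt_sn def_s.
have -> : (s + (r + n - s %% n) = s %/ n * n + (r + n))%N by lia.
by rewrite modnMDl modnDr.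
Qed.

Lemma mul_subn1_addn m n : (0 < m)%N -> ((m - 1) * n + n = m * n)%N.
Proof. by move=> m_gt0; rewrite mulnBl mul1n subnK // leq_pmull. Qed.

Lemma erased_run_start (E : nat -> bool) t : E t ->
  exists a, [/\ (a <= t)%N, forall z, (a <= z <= t)%N -> E z & a = 0%N \/ ~~ E a.-1].
Proof.
elim: t => [|t IH] Et.
  by exists 0%N; split=> [||]; [|move=> z; rewrite leqn0 => /eqP ->|left].
case Et': (E t); last first.
  by exists t.+1; split=> //; [move=> z; rewrite -eqn_leq => /eqP <- | right; rewrite Et'].
have [a [a_le run start]] := IH Et'; exists a; split=> //; first lia.
move=> z /andP[a_le_z]; rewrite leq_eqVlt ltnS => /orP[/eqP-> //|z_le].
by apply: run; rewrite a_le_z.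
Qed.

Lemma burst_convex b M E x y z : burst_admissible b M E ->
  (x <= z <= y)%N -> (y <= x + M)%N -> E x -> E y -> E z.
Proof.
move=> adm z_in y_le; have [s [l [_ win]]] := adm x.
rewrite !win; lia.
Qed.

Lemma burst_around b M E t : (b <= M)%N -> burst_admissible b M E -> E t ->
  exists a L, [/\ (0 < L <= b)%N, (a <= t < a + L)%N &
    forall y, (a + L <= y + M)%N -> (y <= t + M)%N -> E y = (a <= y < a + L)%N].
Proof.
move=> b_le_M adm Et; have [a [a_le_t run start]] := erased_run_start Et.
have [s [l [l_le_b win]]] := adm a.
have Ea : E a by apply: run; rewrite leqnn.
have a_in : (s <= a < s + l)%N by rewrite -win ?Ea ?leqnn ?leq_addr.
pose L := (s + l - a)%N.
have near_a y : (a <= y <= a + M)%N -> E y = (y < a + L)%N.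
  by move=> y_in; rewrite win //; apply/idP/idP; lia.
have t_lt : (t < a + L)%N.
  have t_le : (t <= a + M)%N.
    rewrite leqNgt; apply/negP => lt_t; have := run (a + M)%N.
    by rewrite near_a; lia.
  by rewrite -near_a ?Et //; lia.
exists a, L; split; [lia | lia |] => y y_lo y_hi.
have [y_lt_a | a_le_y] := ltnP y a.
  apply/negbTE/negP => Ey.
  case: start => [a0 | /negP]; first by rewrite a0 in y_lt_a.
  by apply; apply: (burst_convex adm _ _ Ey Ea); lia.
have [y_le_aM | y_gt_aM] := leqP y (a + M); first by rewrite near_a ?a_le_y.
rewrite ltnNge (_ : a + L <= y)%N; last lia.
apply/negbTE/negP => Ey; have := burst_convex adm (z := (a + L)%N) _ _ Et Ey.
by rewrite near_a; lia.
Qed.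

Local Open Scope ring_scope.

Section LinearCode.
Variables (F : fieldType) (k n M : nat) (P' : nat -> 'M[F]_(k, n)).

Lemma parityB S S' tau :
  parity M P' (fun x => S x - S' x) tau = parity M P' S tau - parity M P' S' tau.
Proof.
rewrite /parity -sumrB; apply: eq_bigr => i _.
by case: ifP => _; rewrite ?mulmxBl ?subr0.
Qed.

Lemma parity_isolate D tau (c : 'I_n) i0 (r0 : 'I_k) :
  parity M P' D tau = 0 -> (i0 <= M)%N -> (i0 <= tau)%N -> P' i0 r0 c != 0 ->
  (forall i (r : 'I_k), (i <= M)%N -> (i <= tau)%N -> (i, r) != (i0, r0) ->
     P' i r c != 0 -> D (tau - i)%N 0 r = 0) ->
  D (tau - i0)%N 0 r0 = 0.
Proof.
move=> par0 i0_le_M i0_le_tau nz0 others.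
have other_term i (r : 'I_k) : (i <= M)%N -> (i <= tau)%N -> (i, r) != (i0, r0) ->
    D (tau - i)%N 0 r * P' i r c = 0.
  move=> i_le_M i_le_tau ne; have [->|nz] := eqVneq (P' i r c) 0; first by rewrite mulr0.
  by rewrite others ?mul0r.
have := congr1 (fun v : 'rV_n => v 0 c) par0; rewrite /= summxE mxE.
rewrite (bigD1 (Ordinal (i0_le_M : (i0 < M.+1)%N))) //= i0_le_tau mxE (bigD1 r0) //=.
rewrite big1 => [|r ne_r]; last by apply: other_term; rewrite // xpair_eqE negb_and ne_r orbT.
rewrite big1 => [|i ne_i]; last first.
  case: ifP => i_le_tau; last by rewrite mxE.
  rewrite mxE; apply: big1 => r _; apply: other_term => //; first by rewrite -ltnS.
  by rewrite xpair_eqE negb_and -val_eqE ne_i.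
by rewrite !addr0 => /eqP; rewrite mulf_eq0 (negPf nz0) orbF => /eqP.
Qed.

(* The difference of two inputs that agree on all packets received up to T,
   when the erasures around t form the burst [a, a + L). *)
Definition burst_residual (D : nat -> 'rV[F]_k) (a L T : nat) : Prop :=
  (forall y, (y <= T)%N -> (a + L <= y + M)%N -> ~~ (a <= y < a + L)%N -> D y = 0) /\
  (forall tau, (a + L <= tau <= T)%N -> parity M P' D tau = 0).

Lemma recoverable_of_burst_residual b E t (j : 'I_k) T :
  (b <= M)%N -> burst_admissible b M E -> (t <= T <= t + M)%N ->
  (forall D a L, (0 < L <= b)%N -> burst_residual D a L T -> (a <= t < a + L)%N ->
     D t 0 j = 0) ->
  recoverable M P' E t j T.
Proof.
move=> b_le_M adm T_in residual_t S S' agree.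
have [Et | Et] := boolP (E t); last by have [|->] := agree t _ Et; case/andP: T_in.
have [a [L [L_in t_in burst]]] := burst_around b_le_M adm Et.
have received y : (y <= T)%N -> (a + L <= y + M)%N -> ~~ (a <= y < a + L)%N -> ~~ E y.
  by move=> y_le y_ge; rewrite burst //; lia.
suff : (S t - S' t) 0 j = 0 by rewrite !mxE => /eqP; rewrite subr_eq0 => /eqP.
apply: (residual_t (fun x => S x - S' x) a L) => //; split.
- move=> y y_le y_ge y_out; have [|-> _] := agree y y_le; first exact: received.
  by rewrite subrr.
- move=> tau tau_in; rewrite parityB; have tau_le : (tau <= T)%N by case/andP: tau_in.
  have [|_ ->] := agree tau tau_le; first by apply: received; lia.
  by rewrite subrr.
Qed.

End LinearCode.

Section RDCode.
Variables b2 p q : nat.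

Lemma RD_neq0 i r c : (RD b2 p q i r c != 0) = RD_entry b2 p q i r.+1 c.+1.
Proof. by rewrite /RD mxE; case: ifP; rewrite ?oner_neq0 ?eqxx. Qed.

Lemma RD_entryP i r c : RD_entry b2 p q i r c ->
  [/\ (1 <= i <= b2 - 1)%N, r = modr i q & c = q + modr i (b2 - q)]%N \/
  [/\ i = b2, (1 <= r <= q)%N & r = c] \/
  exists2 l, (1 <= l <= p)%N & [/\ i = l * b2 + q,
     ((l - 1) * b2 + q + 1 <= r <= l * b2 + q)%N & c = r - ((l - 1) * b2 + q)]%N.
Proof.
case/orP => [/orP[] | /hasP[l]]; first by case/and3P => ? /eqP ? /eqP ?; left.
  by case/and3P => /eqP ? ? /eqP ?; right; left.
rewrite mem_iota => l_in /and3P[/eqP ? ? /eqP ?]; right; right; exists l => //; lia.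
Qed.

Lemma RD_entry_shift i : (1 <= i <= b2 - 1)%N ->
  RD_entry b2 p q i (modr i q) (q + modr i (b2 - q)).
Proof. by move=> i_in; rewrite /RD_entry i_in !eqxx. Qed.

Lemma RD_entry_diag r : (1 <= r <= q)%N -> RD_entry b2 p q b2 r r.
Proof. by move=> r_in; rewrite /RD_entry r_in !eqxx orbT. Qed.

Lemma RD_entry_block l c : (1 <= l <= p)%N -> (1 <= c <= b2)%N ->
  RD_entry b2 p q (l * b2 + q) ((l - 1) * b2 + q + c) c.
Proof.
move=> l_in c_in; apply/orP; right; apply/hasP; exists l; first by rewrite mem_iota; lia.
have := @mul_subn1_addn l b2; rewrite eqxx /=; lia.
Qed.

End RDCode.

Section RDResidual.
Variables b2 p q : nat.
Hypotheses (p_gt0 : (0 < p)%N) (q_gt0 : (0 < q)%N) (q_lt_b2 : (q < b2)%N).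
Local Notation k := (p * b2 + q)%N.
Variables (D : nat -> 'rV['F_2]_k) (a L T : nat).
Hypotheses (L_gt0 : (0 < L)%N) (L_le_b2 : (L <= b2)%N).
Hypothesis residual : burst_residual k (RD b2 p q) D a L T.

Lemma b2_le_k : (b2 <= k)%N.
Proof. by rewrite (leq_trans (leq_pmull b2 p_gt0)) ?leq_addr. Qed.

Lemma residual_isolate x i0 (r0 : 'I_k) (c : 'I_b2) :
  (a + L <= x + i0 <= T)%N -> (i0 <= k)%N -> RD_entry b2 p q i0 r0.+1 c.+1 ->
  (forall i (r : 'I_k), (i <= k)%N -> (i <= x + i0)%N -> (i, r) != (i0, r0) ->
     RD_entry b2 p q i r.+1 c.+1 -> D (x + i0 - i)%N 0 r = 0) ->
  D x 0 r0 = 0.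
Proof.
case: residual => _ par0 tau_in i0_le entry0 others.
have entry0_nz : RD b2 p q i0 r0 c != 0 by rewrite RD_neq0.
rewrite -(addnK i0 x); apply: (parity_isolate (par0 _ tau_in) _ _ entry0_nz) => //.
  exact: leq_addl.
by move=> i r i_le i_le_tau ne; rewrite RD_neq0; apply: others.
Qed.

Lemma residual_out_of_burst x i (r : 'I_k) :
  (a + L <= x <= T)%N -> (i <= k)%N -> (i <= x)%N -> ~~ (a <= x - i < a + L)%N ->
  D (x - i)%N 0 r = 0.
Proof. by case: residual => out _ *; rewrite out ?mxE //; lia. Qed.

Lemma residual_top_early x (r : 'I_k) :
  (r < q)%N -> (a <= x < a + q)%N -> (x + b2 <= T)%N -> D x 0 r = 0.
Proof.
move=> r_lt x_in x_le; have b2k := b2_le_k; have r_lt_b2 := ltn_trans r_lt q_lt_b2.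
have b2q_gt0 : (0 < b2 - q)%N by rewrite subn_gt0.
apply: (@residual_isolate _ b2 r (Ordinal r_lt_b2)) => //=; first lia.
  by apply: RD_entry_diag; lia.
move=> i r' i_le i_le_x ne.
case/RD_entryP=> [[_ _ col] | [[i_eq _ r'_col] | [l l_in [i_eq _ _]]]].
- by have := modr_bound i b2q_gt0; lia.
- have r'_eq : r' = r by apply: val_inj => /=; lia.
  by move: ne; rewrite i_eq r'_eq eqxx.
- have l_b2 : (b2 <= l * b2)%N by apply: leq_pmull; lia.
  by apply: residual_out_of_burst => //; lia.
Qed.

(* The other 1s in the column of the shift entry of P'_i0 sit at indices
   i = i0 mod (b2 - q): for i > i0 they hit earlier burst slots (induction),
   for i < i0 they land after the burst. *)
Lemma residual_top_burst x (r : 'I_k) :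
  (r < q)%N -> (a <= x < a + L)%N -> (a + q + b2 <= T.+1)%N -> D x 0 r = 0.
Proof.
move=> + + T_ge; elim/ltn_ind: x r => x IH r r_lt x_in.
have [x_early | x_late] := ltnP x (a + q); first by apply: residual_top_early; lia.
have b2q_gt0 : (0 < b2 - q)%N by rewrite subn_gt0.
have [i0 [i0_in i0_row]] := @modr_onto_window (a + L - x) q r.+1 q_gt0 r_lt.
have col_in := modr_bound i0 b2q_gt0; have b2k := b2_le_k.
have c_lt : ((q + modr i0 (b2 - q)).-1 < b2)%N by lia.
apply: (@residual_isolate _ i0 r (Ordinal c_lt)) => /=; rewrite ?prednK; try lia.
  by rewrite -i0_row; apply: RD_entry_shift; lia.
move=> i r' i_le i_le_x ne.
case/RD_entryP=> [[i_in r'_row col] | [[_ r'_top r'_col] | [l l_in [i_eq _ _]]]].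
- have same_col : modr i (b2 - q) = modr i0 (b2 - q) by lia.
  have [i_lt | i0_lt | i_eq] := ltngtP i i0.
  + have := modr_eq_gap b2q_gt0 same_col i_lt.
    by move=> gap; apply: residual_out_of_burst => //; lia.
  + have [x'_in | x'_out] := boolP (a <= x + i0 - i < a + L)%N.
      by apply: IH => //; [lia | have := modr_bound i q_gt0; lia].
    by apply: residual_out_of_burst => //; lia.
  + subst i; have r'_eq : r' = r by apply: val_inj => /=; lia.
    by move: ne; rewrite r'_eq eqxx.
- lia.
- have l_b2 : (b2 <= l * b2)%N by apply: leq_pmull; lia.
  by apply: residual_out_of_burst => //; lia.
Qed.

Lemma residual_top y (r : 'I_k) :
  (r < q)%N -> (a + q + b2 <= T.+1)%N -> (y <= T)%N -> (a + L <= y + k)%N -> D y 0 r = 0.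
Proof.
move=> r_lt T_ge y_le y_ge; have [y_in | y_out] := boolP (a <= y < a + L)%N.
  exact: residual_top_burst.
by case: residual => out _; rewrite out ?mxE.
Qed.

Lemma residual_block l (c : 'I_b2) (r0 : 'I_k) x :
  (1 <= l <= p)%N -> (r0 : nat) = ((l - 1) * b2 + q + c)%N -> (a <= x < a + L)%N ->
  (x + (l * b2 + q) <= T)%N -> D x 0 r0 = 0.
Proof.
move=> l_in r0_eq x_in x_le; have b2k := b2_le_k.
have l_b2 : (b2 <= l * b2)%N by apply: leq_pmull; lia.
have l_le_p : (l * b2 <= p * b2)%N by rewrite leq_mul2r; lia.
have l_pred : ((l - 1) * b2 + b2 = l * b2)%N by apply: mul_subn1_addn; lia.
apply: (@residual_isolate _ (l * b2 + q) r0 c); try lia.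
  rewrite (_ : r0.+1 = (l - 1) * b2 + q + c.+1)%N; last lia.
  by apply: RD_entry_block; have := ltn_ord c; lia.
move=> i r' i_le i_le_x ne /RD_entryP[[_ r'_row _]|[[_ r'_in _]|[j j_in [i_eq r'_in c_eq]]]].
- by apply: residual_top; have := modr_bound i q_gt0; lia.
- by apply: residual_top; lia.
have [j_lt | l_lt | j_eq] := ltngtP j l.
- have : (j.+1 * b2 <= l * b2)%N by rewrite leq_mul2r j_lt orbT.
  by rewrite mulSn => j_gap; apply: residual_out_of_burst => //; lia.
- have : (l.+1 * b2 <= j * b2)%N by rewrite leq_mul2r l_lt orbT.
  by rewrite mulSn => l_gap; apply: residual_out_of_burst => //; lia.
- subst j; have r'_eq : r' = r0 by apply: val_inj => /=; lia.
  by move: ne; rewrite i_eq r'_eq eqxx.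
Qed.

End RDResidual.

Theorem mainTheorem8 (b2 p q : nat) :
  (2 <= b2)%N -> (1 <= p)%N -> (1 <= q)%N -> (q < b2)%N ->
  forall E : nat -> bool, burst_admissible b2 (p * b2 + q) E ->
  forall (t : nat) (j : 'I_(p * b2 + q)),
    ((j.+1 <= q)%N -> recoverable (p * b2 + q) (RD b2 p q) E t j (t + b2)) /\
    (forall l : nat, (1 <= l <= p)%N ->
       ((l - 1) * b2 + q + 1 <= j.+1 <= l * b2 + q)%N ->
       recoverable (p * b2 + q) (RD b2 p q) E t j (t + (l * b2 + q))).
Proof.
move=> _ p_gt0 q_gt0 q_lt_b2 E adm t j; have b2k := b2_le_k b2 q p_gt0.
split=> [j_top | l l_in j_block].
  apply: (recoverable_of_burst_residual b2k adm); first lia.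
  move=> D a L /andP[L_gt0 L_le] res t_in; have [t_early | t_late] := ltnP t (a + q).
    by apply: (residual_top_early p_gt0 q_gt0 q_lt_b2 L_gt0 L_le res); lia.
  by apply: (residual_top_burst p_gt0 q_gt0 q_lt_b2 L_gt0 L_le res); lia.
have l_pred : ((l - 1) * b2 + b2 = l * b2)%N by apply: mul_subn1_addn; lia.
have l_le_p : (l * b2 <= p * b2)%N by rewrite leq_mul2r; lia.
apply: (recoverable_of_burst_residual b2k adm); first lia.
move=> D a L /andP[L_gt0 L_le] res t_in.
have c_lt : (j - ((l - 1) * b2 + q) < b2)%N by lia.
by apply: (residual_block p_gt0 q_gt0 q_lt_b2 L_gt0 L_le res l_in (c := Ordinal c_lt)) => /=; lia.
Qed.
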